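(* Let $R$ be an associative ring with identity and involution $*$, and let $a\in R^{\#}\cap R^{\dagger}$. Then $a\in R^{SEP}$ if and only if there exists $x\in\rho_a=\{a,\ a^{\#},\ a^{\dagger},\ a^*,\ (a^{\dagger})^*,\ (a^{\#})^*,\ (a^{\#})^{\dagger},\ (a^{\dagger})^{\#}\}$ such that $a(a^{\#})^*a^{\dagger}$ and $a^{\dagger}a^2$ are left $x$-equivalent, i.e. $x\,a(a^{\#})^*a^{\dagger}=x\,a^{\dagger}a^2$.
   Context: An involution on $R$ is a map $x\mapsto x^*$ with $(x^* )^*=x$, $(x+y)^*=x^*+y^*$, $(xy)^*=y^*x^*$. An element $a$ is Moore–Penrose invertible if there is $b$ with $aba=a$, $bab=b$, $(ab)^*=ab$, $(ba)^*=ba$; such $b$ is unique, denoted $a^{\dagger}$, and $R^{\dagger}$ is the set of such $a$. An element $a$ is group invertible if there is $b$ with $aba=a$, $bab=b$, $ab=ba$; such $b$ is unique, denoted $a^{\#}$, and $R^{\#}$ is the set of such $a$. For $a\in R^{\#}\cap R^{\dagger}$, the elements $a^{\#}$ is Moore–Penrose invertible and $a^{\dagger}$ is group invertible, so $(a^{\#})^{\dagger}$ and $(a^{\dagger})^{\#}$ exist. For $a\in R^{\#}\cap R^{\dagger}$, $a$ is SEP if $a^*=a^{\dagger}=a^{\#}$; $R^{SEP}$ denotes the set of SEP elements. For $x,b,c\in R$, $b$ and $c$ are left $x$-equivalent if $xb=xc$. *)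

From mathcomp Require Import all_boot all_algebra.
Set Implicit Arguments. Unset Strict Implicit. Unset Printing Implicit Defensive.
Import GRing.Theory.
Local Open Scope ring_scope.

Definition is_involution (R : pzRingType) (s : R -> R) : Prop :=
  [/\ forall x, s (s x) = x,
      forall x y, s (x + y) = s x + s y &
      forall x y, s (x * y) = s y * s x].

Definition is_MP_inverse (R : pzRingType) (s : R -> R) (a b : R) : Prop :=
  [/\ a * b * a = a, b * a * b = b, s (a * b) = a * b & s (b * a) = b * a].

Definition is_group_inverse (R : pzRingType) (a b : R) : Prop :=
  [/\ a * b * a = a, b * a * b = b & a * b = b * a].

Definition is_SEP (R : pzRingType) (s : R -> R) (a ad ag : R) : Prop :=
  s a = ad /\ ad = ag.

Definition left_equiv (R : pzRingType) (x b c : R) : Prop := x * b = x * c.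

(* Every x in rho_a has a left multiple y x equal to a or to the projection
   a a^dagger, so with b := a (a^#)^* a^dagger and c := a^dagger a^2 the
   hypothesis x b = x c yields a b = a c or a a^dagger b = a a^dagger c; each
   forces a^2 a^dagger = a and b = a (in the second case because left
   multiplication by a (a^# a)^* cancels the factor a a^dagger a^dagger a).
   From a^2 a^dagger = a we get a a^# = a a^dagger, which is hermitian, so
   a^# = a^dagger by uniqueness of the Moore-Penrose inverse.  Now b = a reads
   a (a^dagger)^* a^dagger = a, whence (a^dagger)^* a^dagger = a a^dagger and
   a^* = a^* (a^dagger)^* a^dagger = (a^dagger a)^* a^dagger = a^dagger. *)

From mathcomp Require Import all_boot all_algebra.
Set Implicit Arguments. Unset Strict Implicit. Unset Printing Implicit Defensive.
Local Open Scope ring_scope.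
Import GRing.Theory.

Lemma left_equiv_mull (R : pzRingType) (x y b c : R) :
  left_equiv x b c -> left_equiv (y * x) b c.
Proof. by rewrite /left_equiv -!mulrA => ->. Qed.

Section MPGroupInverse.

Variables (R : pzRingType) (s : R -> R).
Hypothesis Hs : is_involution s.

Let sK x : s (s x) = x. Proof. by case: Hs. Qed.
Let sM x y : s (x * y) = s y * s x. Proof. by case: Hs. Qed.

Lemma hermitian_absorb_eq (p q : R) :
  s p = p -> s q = q -> q * p = p -> p * q = q -> p = q.
Proof. by move=> sp sq qp pq; rewrite -sp -qp sM sq sp pq. Qed.

Lemma MP_inverse_unique (a b c : R) :
  is_MP_inverse s a b -> is_MP_inverse s a c -> b = c.
Proof.
case=> b1 b2 b3 b4 [c1 c2 c3 c4].
have abc : a * b = a * c.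
  by apply: hermitian_absorb_eq; rewrite // mulrA ?b1 ?c1.
have bca : b * a = c * a.
  apply: hermitian_absorb_eq => //.
    by rewrite -[c * a]c4 -[b * a]b4 -sM -mulrA (mulrA a c) c1.
  by rewrite -[b * a]b4 -[c * a]c4 -sM -mulrA (mulrA a b) b1.
by rewrite -b2 -mulrA abc mulrA bca c2.
Qed.

Variables (a ad ag : R).
Hypotheses (Had : is_MP_inverse s a ad) (Hag : is_group_inverse a ag).

Lemma group_inverse_eq_MP_of_hermitian : s (a * ag) = a * ag -> ag = ad.
Proof.
case: Hag => g1 g2 g3 herm.
by apply: MP_inverse_unique Had; split; rewrite // -g3.
Qed.

Lemma group_inverse_eq_MP_of_range : a * a * ad = a -> ag = ad.
Proof.
case: Had => _ _ h3 _; case: Hag => g1 _ g3 aad.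
have agaa : ag * a * a = a by rewrite -g3 g1.
have proj : a * ad = a * ag by rewrite g3 -[in RHS]aad !mulrA agaa.
by apply: group_inverse_eq_MP_of_hermitian; rewrite -proj h3.
Qed.

Lemma adjoint_eq_MP_of_proj : s ad * ad = a * ad -> s a = ad.
Proof.
case: Had => h1 h2 h3 h4 proj.
by rewrite -{1}h1 sM h3 -proj mulrA -sM h4 h2.
Qed.

Lemma SEP_of_fixpoint : a * s ag * ad = a -> is_SEP s a ad ag.
Proof.
move=> fix_a; case: Had => _ h2 h3 _; case: Hag => _ _ g3.
have aad : a * a * ad = a.
  by rewrite -[X in X * a * ad]fix_a -!mulrA (mulrA ad) h2 !mulrA.
have gE := group_inverse_eq_MP_of_range aad.
have commE : ad * a = a * ad by rewrite -gE g3.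
suff : s ad * ad = a * ad by move/adjoint_eq_MP_of_proj.
have sadE : a * ad * s ad = s ad by rewrite -[in RHS]h2 -[ad * a * ad]mulrA sM h3.
rewrite gE in fix_a.
by rewrite -sadE -commE -!mulrA (mulrA a) fix_a.
Qed.

Lemma fixpoint_of_left_equiv_a :
  left_equiv a (a * s ag * ad) (ad * a ^+ 2) -> a * s ag * ad = a.
Proof.
case: Had => h1 _ _ _; case: Hag => g1 _ g3; rewrite /left_equiv => eqa.
have agaa : ag * a * a = a by rewrite -g3 g1.
have aada : a * (ad * a ^+ 2) = a * a by rewrite expr2 !mulrA h1.
by have := congr1 (fun t => ag * t) eqa; rewrite aada !mulrA agaa.
Qed.

Lemma fixpoint_of_left_equiv_proj :
  left_equiv (a * ad) (a * s ag * ad) (ad * a ^+ 2) -> a * s ag * ad = a.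
Proof.
case: Had => h1 h2 h3 h4; case: Hag => g1 _ g3; rewrite /left_equiv.
have -> : a * ad * (a * s ag * ad) = a * s ag * ad by rewrite !mulrA h1.
move=> fixE.
have agaa : ag * a * a = a by rewrite -g3 g1.
have fixR : a * s ag * ad * (a * ad) = a * s ag * ad.
  by rewrite -!mulrA (mulrA ad a ad) h2.
rewrite fixE in fixR.
pose e := s (ag * a).
have e_p y : e * (a * (ad * y)) = e * y.
  suff e_p1 : e * (a * ad) = e by rewrite (mulrA a) mulrA e_p1.
  by rewrite /e -[a * ad]h3 -sM -g3 mulrA h1.
have e_q y : e * (ad * (a * y)) = ad * (a * y).
  suff e_q1 : e * (ad * a) = ad * a by rewrite (mulrA ad) mulrA e_q1.
  by rewrite /e -[ad * a]h4 -sM -mulrA (mulrA a ag) g1.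
have cancel y : a * (e * (a * (ad * (ad * (a * y))))) = a * y.
  by rewrite e_p e_q !mulrA h1.
have key : a * (a * (a * ad)) = a * a.
  by move: (congr1 (fun t => a * (e * t)) fixR); rewrite expr2 -!mulrA !cancel.
have aad : a * a * ad = a.
  by move: (congr1 (fun t => ag * t) key); rewrite !mulrA agaa.
have gE := group_inverse_eq_MP_of_range aad.
have commE : ad * a = a * ad by rewrite -gE g3.
by rewrite fixE expr2 (mulrA ad) commE h1 h1.
Qed.

Lemma left_equiv_of_SEP :
  is_SEP s a ad ag -> left_equiv a (a * s ag * ad) (ad * a ^+ 2).
Proof.
case: Had => h1 _ _ _; case: Hag => _ _ g3; case=> sa gE.
have sagE : s ag = a by rewrite -gE -sa sK.
have commE : ad * a = a * ad by rewrite gE g3.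
rewrite /left_equiv sagE expr2 (mulrA ad) commE h1.
by congr (a * _); rewrite -mulrA -commE mulrA h1.
Qed.

Lemma rho_left_multiple (adg gad x : R) :
  is_MP_inverse s ag adg -> is_group_inverse ad gad ->
  x \in [:: a; ag; ad; s a; s ad; s ag; adg; gad] ->
  exists y, y * x = a \/ y * x = a * ad.
Proof.
case: Had => h1 _ h3 h4; case: Hag => g1 g2 g3.
move=> [k1 _ k3 _] [d1 _ d3]; rewrite !inE.
have agaa : ag * a * a = a by rewrite -g3 g1.
case/predU1P => [->|]; first by exists 1; left; rewrite mul1r.
case/predU1P => [->|].
  by exists (a * a); left; rewrite -mulrA g3 mulrA g1.
case/predU1P => [->|]; first by exists a; right.
case/predU1P => [->|]; first by exists (s ad); right; rewrite -sM h3.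
case/predU1P => [->|].
  by exists (a * s a); left; rewrite -mulrA -sM h4 mulrA h1.
case/predU1P => [->|].
  exists (a * ad * s a); right.
  by rewrite -mulrA -sM -[a * ad]h3 -sM mulrA agaa.
case/predU1P => [->|].
  exists ag; right; apply: hermitian_absorb_eq => //.
    have agag : a * ad * ag = ag by rewrite -{1}g2 -g3 !mulrA h1 g3 g2.
    by rewrite mulrA agag.
  by rewrite -{1}agaa !mulrA k1 agaa.
move/eqP->; exists (a * ad * ad); right.
by rewrite -mulrA d3 -mulrA (mulrA ad gad) d1.
Qed.

End MPGroupInverse.

Theorem theorem5p2 (R : pzRingType) (s : R -> R) (a ad ag adg gad : R)
  (Hs : is_involution s)
  (Had : is_MP_inverse s a ad)        (* ad = a^dagger *)
  (Hag : is_group_inverse a ag)       (* ag = a^# *)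
  (Hadg : is_MP_inverse s ag adg)     (* adg = (a^#)^dagger *)
  (Hgad : is_group_inverse ad gad) :  (* gad = (a^dagger)^# *)
  is_SEP s a ad ag <->
  exists2 x, x \in [:: a; ag; ad; s a; s ad; s ag; adg; gad] &
    left_equiv x (a * s ag * ad) (ad * a ^+ 2).
Proof.
split=> [sep | [x xrho xE]].
  by exists a; [exact: mem_head | exact: left_equiv_of_SEP].
apply: SEP_of_fixpoint => //.
have [y [yx|yx]] := rho_left_multiple Hs Had Hag Hadg Hgad xrho;
  have := left_equiv_mull y xE; rewrite yx.
  exact: fixpoint_of_left_equiv_a.
exact: fixpoint_of_left_equiv_proj.
Qed.
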